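(* Let $Y$ be a Young diagram with row lengths $a_1\ge\cdots\ge a_m\ge0$ and size $|Y|=\sum_i a_i$. If $\tau^{(2)}(H(Y))=|Y|$, then $Y$ is wide.
   Context: A Young diagram with row lengths $a_1\ge\cdots\ge a_m\ge 0$ represents the partition $|Y|=a_1+\cdots+a_m$. Its conjugate $Y'$ has row lengths $b_j=|\{i:a_i\ge j\}|$. A diagram $X$ dominates a diagram $Z$ of the same size if $\sum_{i=1}^k a_i(X)\ge \sum_{i=1}^k a_i(Z)$ for all $k\ge1$ (padding with zeros). $Y$ is wide if for every subset of its rows, the diagram $Z$ formed by those rows dominates $Z'$. The hypergraph $H(Y)$ has vertex sides $R=\{r_1,\dots,r_m\}$, $C=\{c_1,\dots,c_{a_1}\}$, $S=\{s_1,\dots,s_{a_1}\}$ and edges $\{r_i,c_j,s_k\}$ for all $1\le i\le m$, $1\le j,k\le a_i$. A 2-cover of a hypergraph $H$ is a set $P$ of 2-element vertex sets, each contained in some edge, such that every edge of $H$ contains a member of $P$; $\tau^{(2)}(H)$ is the minimum size of a 2-cover. *)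

From mathcomp Require Import all_boot.
Set Implicit Arguments. Unset Strict Implicit. Unset Printing Implicit Defensive.

Definition young (a : seq nat) : Prop := sorted geq a.

Definition ysize (a : seq nat) : nat := sumn a.

Definition a1 (a : seq nat) : nat := foldr maxn 0 a.

Definition conj (a : seq nat) : seq nat :=
  [seq count (fun x => j <= x) a | j <- iota 1 (a1 a)].

(* X dominates Z (same size; partial sums compared, padding with zeros) *)
Definition dominates (X Z : seq nat) : Prop :=
  sumn X = sumn Z /\ forall k, 1 <= k -> sumn (take k Z) <= sumn (take k X).

(* Y is wide: for every subset of rows, the diagram Z formed by them dominates Z'.
   A subset of rows (kept in order) is a subsequence of the row sequence. *)
Definition wide (a : seq nat) : Prop :=
  forall z, subseq z a -> dominates z (conj z).

Definition two_cover (V : finType) (E P : {set {set V}}) : bool :=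
  [forall p in P, (#|p| == 2) && [exists e in E, p \subset e]] &&
  [forall e in E, [exists p in P, p \subset e]].

(* tau^(2)(H): minimum size of a 2-cover (the default value #|{set V}| is
   an upper bound on the size of any 2-cover, so it never affects the min
   once a 2-cover exists). *)
Definition tau2 (V : finType) (E : {set {set V}}) : nat :=
  \big[minn/#|{: {set V}}|]_(P : {set {set V}} | two_cover E P) #|P|.

(* Vertices of H(Y): R = 'I_m, C = 'I_(a_1), S = 'I_(a_1) (0-indexed). *)
Definition HV (a : seq nat) : finType :=
  ('I_(size a) + ('I_(a1 a) + 'I_(a1 a)))%type.

(* Edges {r_i, c_j, s_k} for all i and all j, k <= a_i (0-indexed: j, k < a_i). *)
Definition HY (a : seq nat) : {set {set HV a}} :=
  [set [set (inl t.1 : HV a); inr (inl t.2.1); inr (inr t.2.2)]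
     | t in [set t : 'I_(size a) * ('I_(a1 a) * 'I_(a1 a))
              | (t.2.1 < nth 0 a t.1) && (t.2.2 < nth 0 a t.1)]].

From mathcomp Require Import all_boot order zify.
Import Order.TTheory.
Set Implicit Arguments. Unset Strict Implicit. Unset Printing Implicit Defensive.

(* Suppose the rows Z of Y indexed by a subsequence do not dominate Z': the first
   k rows of Z' are longer in total than the first k rows of Z.  Let L be the
   (k+1)-st row of Z.  Cover an edge {r_i, c_j, s_l} of H(Y) by {r_i, c_j} unless
   r_i is a row of Z and j < k, otherwise by {r_i, s_l} unless l < L, and
   otherwise by {c_j, s_l} with j < k and l < L.  This 2-cover has size at most
   |Y| + k L + sum_{z in Z} (z - L)^+ - sum_{z in Z} min(z, k).  As Z is sorted,
   k L + sum (z - L)^+ is at most the sum of the first k rows of Z, whereas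
   sum min(z, k) is the sum of the first k rows of Z'.  Hence tau^(2) < |Y|. *)

Lemma geq_trans : transitive geq. Proof. exact: rev_trans leq_trans. Qed.

Lemma leq_a1 s x : x \in s -> x <= a1 s.
Proof.
elim: s => //= y s IH; rewrite inE => /orP[/eqP-> | /IH x_le]; first exact: leq_maxl.
exact: leq_trans x_le (leq_maxr _ _).
Qed.

Lemma count_iota1_leq x n : count (fun j => j <= x) (iota 1 n) = minn x n.
Proof.
elim: n => [|n IH]; first by rewrite minn0.
by rewrite -[n.+1]addn1 iotaD count_cat IH /=; case: leqP; lia.
Qed.

Lemma sumn_count_exchange (r : rel nat) (s z : seq nat) :
  sumn [seq count (r j) z | j <- s] = sumn [seq count (r^~ x) s | x <- z].
Proof.
rewrite !sumnE !big_map; under eq_bigr do rewrite -sum1_count big_mkcond.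
by rewrite exchange_big; apply: eq_bigr => x _; rewrite -sum1_count [RHS]big_mkcond.
Qed.

Lemma sumn_take_conj z k : sumn (take k (conj z)) = sumn [seq minn x k | x <- z].
Proof.
rewrite /conj -map_take take_iota (sumn_count_exchange (fun j x => j <= x)).
by congr sumn; apply/eq_in_map => x /leq_a1 x_le; rewrite count_iota1_leq; lia.
Qed.

Lemma sumn_conj z : sumn (conj z) = sumn z.
Proof.
rewrite -(take_oversize (leqnn (size (conj z)))) sumn_take_conj size_map size_iota.
by congr sumn; rewrite -[RHS]map_id; apply/eq_in_map => x /leq_a1; lia.
Qed.

Lemma sorted_sumn_take_ge z k : sorted geq z ->
  k * nth 0 z k + sumn [seq x - nth 0 z k | x <- z] <= sumn (take k z).
Proof.
elim: z k => [|x z IH] [|k] //= z_sorted; first by rewrite muln0.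
  have /allP x_max := order_path_min geq_trans z_sorted.
  by rewrite subnn sumnE big_map big1_seq // => y /andP[_ /x_max]; lia.
have nth_le_x : nth 0 z k <= x.
  case: (ltnP k (size z)) => [/(mem_nth 0) | /(nth_default 0)->//].
  exact: allP (order_path_min geq_trans z_sorted) _.
have := IH k (path_sorted z_sorted); lia.
Qed.

Lemma sumn_mask (f : nat -> nat) s m :
  sumn [seq f x | x <- mask m s] = \sum_(i < size s | nth false m i) f (nth 0 s i).
Proof.
rewrite sumnE big_map big_mask; apply: eq_big => i; first by rewrite andbT.
by rewrite (tnth_nth 0).
Qed.

Lemma sumn_nth s : sumn s = \sum_(i < size s) nth 0 s i.
Proof. by rewrite sumnE big_tnth; apply: eq_bigr => i _; rewrite (tnth_nth 0). Qed.

Lemma card_ord_range n lo hi : #|[set j : 'I_n | lo <= j < hi]| <= hi - lo.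
Proof.
rewrite cardE -(size_map val) -(size_iota lo (hi - lo)).
apply: uniq_leq_size; first by rewrite (map_inj_uniq val_inj) enum_uniq.
by move=> x /mapP[j]; rewrite mem_enum inE mem_iota => /andP[lo_j j_hi] ->/=; lia.
Qed.

Lemma card_pairs_range (I : finType) n (lo hi : I -> nat) :
  #|[set t : I * 'I_n | lo t.1 <= t.2 < hi t.1]| <= \sum_i (hi i - lo i).
Proof.
rewrite -sum1dep_card.
rewrite -(pair_big_dep xpredT (fun i (j : 'I_n) => lo i <= j < hi i) (fun _ _ => 1)) /=.
by apply: leq_sum => i _; rewrite sum1dep_card card_ord_range.
Qed.

Lemma tau2_le_card (V : finType) (E P : {set {set V}}) : two_cover E P -> tau2 E <= #|P|.
Proof. by move=> P_cover; rewrite /tau2 -minEnat -leEnat; apply: bigmin_le_cond. Qed.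

Section ThresholdCover.

Variable a : seq nat.

Local Notation len i := (nth 0 a (i : 'I_(size a))).

Definition HY_edge (i : 'I_(size a)) (j l : 'I_(a1 a)) : {set HV a} :=
  [set inl i; inr (inl j); inr (inr l)].

Lemma HY_edge_in_HY (i : 'I_(size a)) (j l : 'I_(a1 a)) :
  j < len i -> l < len i -> HY_edge i j l \in HY a.
Proof. by move=> j_lt l_lt; apply/imsetP; exists (i, (j, l)); rewrite // inE /= j_lt. Qed.

Lemma pair_in_edge (i : 'I_(size a)) (j l : 'I_(a1 a)) (x y : HV a) :
  j < len i -> l < len i -> x != y -> x \in HY_edge i j l -> y \in HY_edge i j l ->
  (#|[set x; y]| == 2) && [exists e in HY a, [set x; y] \subset e].
Proof.
move=> j_lt l_lt xy x_in y_in; rewrite cards2 xy /=.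
apply/exists_inP; exists (HY_edge i j l); first exact: HY_edge_in_HY.
by rewrite subUset !sub1set x_in y_in.
Qed.

Variables (sel : pred 'I_(size a)) (k L : nat).

Definition col_threshold i := if sel i then k else 0.
Definition sym_threshold i := if sel i then L else len i.

Definition row_col_pairs : {set {set HV a}} :=
  [set [set inl t.1; inr (inl t.2)]
     | t in [set t : 'I_(size a) * 'I_(a1 a) | col_threshold t.1 <= t.2 < len t.1]].

Definition row_sym_pairs : {set {set HV a}} :=
  [set [set inl t.1; inr (inr t.2)]
     | t in [set t : 'I_(size a) * 'I_(a1 a) | sym_threshold t.1 <= t.2 < len t.1]].

Definition col_sym_pairs : {set {set HV a}} :=
  [set [set inr (inl t.1); inr (inr t.2)]
     | t in [set t : 'I_(a1 a) * 'I_(a1 a)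
              | [&& t.1 < k, t.2 < L & [exists i, (t.1 < len i) && (t.2 < len i)]]]].

Definition threshold_cover := row_col_pairs :|: row_sym_pairs :|: col_sym_pairs.

Lemma two_cover_threshold : two_cover (HY a) threshold_cover.
Proof.
apply/andP; split.
  apply/forall_inP => p; rewrite !inE => /orP[/orP[]|] /imsetP[[u v]]; rewrite inE /=.
  1,2: by case/andP=> _ v_lt ->; apply: (@pair_in_edge u v v); rewrite ?inE ?eqxx ?orbT.
  case/and3P=> _ _ /existsP[i /andP[u_lt v_lt]] ->.
  by apply: (@pair_in_edge i u v); rewrite ?inE ?eqxx ?orbT.
apply/forall_inP => e /imsetP[[i [j l]]]; rewrite inE /= => /andP[j_lt l_lt] ->.
apply/exists_inP; case col_j: (col_threshold i <= j).
  exists [set inl i; inr (inl j)]; last by rewrite subUset !sub1set !inE !eqxx ?orbT.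
  rewrite !inE; apply/orP; left; apply/orP; left.
  by apply/imsetP; exists (i, j); rewrite // inE /= col_j.
case sym_l: (sym_threshold i <= l).
  exists [set inl i; inr (inr l)]; last by rewrite subUset !sub1set !inE !eqxx ?orbT.
  rewrite !inE; apply/orP; left; apply/orP; right.
  by apply/imsetP; exists (i, l); rewrite // inE /= sym_l.
have sel_i : sel i by move: col_j; rewrite /col_threshold; case: (sel i).
move: col_j sym_l; rewrite /col_threshold /sym_threshold sel_i.
move=> /negbT; rewrite -ltnNge => j_lt_k /negbT; rewrite -ltnNge => l_lt_L.
exists [set inr (inl j); inr (inr l)]; last by rewrite subUset !sub1set !inE !eqxx ?orbT.
rewrite !inE; apply/orP; right; apply/imsetP; exists (j, l); rewrite // inE /= j_lt_k l_lt_L.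
by apply/existsP; exists i; rewrite j_lt l_lt.
Qed.

Lemma card_threshold_cover : #|threshold_cover| <=
  \sum_i (len i - col_threshold i) + \sum_i (len i - sym_threshold i) + k * L.
Proof.
have rc : #|row_col_pairs| <= \sum_i (len i - col_threshold i).
  exact: leq_trans (leq_imset_card _ _) (card_pairs_range _ _ _).
have rs : #|row_sym_pairs| <= \sum_i (len i - sym_threshold i).
  exact: leq_trans (leq_imset_card _ _) (card_pairs_range _ _ _).
have cs : #|col_sym_pairs| <= k * L.
  apply: leq_trans (leq_imset_card _ _) _.
  apply: leq_trans (subset_leq_card (_ : _ \subset setX [set j : 'I_(a1 a) | 0 <= j < k]
                                                         [set l : 'I_(a1 a) | 0 <= l < L])) _.
    by apply/subsetP => t; rewrite !inE => /and3P[-> -> _].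
  by rewrite cardsX; apply: leq_mul; rewrite -[leqRHS]subn0 card_ord_range.
rewrite /threshold_cover !cardsU; lia.
Qed.

Lemma tau2_HY_threshold_bound :
  tau2 (HY a) + \sum_(i < size a | sel i) minn (len i) k
    <= sumn a + \sum_(i < size a | sel i) (len i - L) + k * L.
Proof.
have cover_size : \sum_i (len i - col_threshold i) + \sum_i (len i - sym_threshold i)
                    + \sum_(i < size a | sel i) minn (len i) k
                  = sumn a + \sum_(i < size a | sel i) (len i - L).
  rewrite sumn_nth !(big_mkcond sel) -!big_split /=; apply: eq_bigr => i _.
  by rewrite /col_threshold /sym_threshold; case: (sel i); lia.
have := tau2_le_card two_cover_threshold; have := card_threshold_cover; lia.
Qed.

End ThresholdCover.

Lemma tau2_HY_lt_of_not_dominated a m k : young a ->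
  sumn (take k (mask m a)) < sumn (take k (conj (mask m a))) -> tau2 (HY a) < ysize a.
Proof.
move=> a_young; set z := mask m a; set L := nth 0 z k => not_dominated.
have z_sorted : sorted geq z := sorted_mask geq_trans m a_young.
have take_z_ge :
    k * L + \sum_(i < size a | nth false m i) (nth 0 a i - L) <= sumn (take k z).
  by rewrite -(sumn_mask (fun x => x - L)); apply: sorted_sumn_take_ge.
have take_conj_z :
    sumn (take k (conj z)) = \sum_(i < size a | nth false m i) minn (nth 0 a i) k.
  by rewrite sumn_take_conj sumn_mask.
have := @tau2_HY_threshold_bound a (fun i => nth false m i) k L.
rewrite /ysize; lia.
Qed.

Theorem theorem3 (a : seq nat) :
  young a -> tau2 (HY a) = ysize a -> wide a.
Proof.
move=> a_young tau2_eq _ /subseqP[m _ ->]; split; first by rewrite sumn_conj.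
move=> k _; rewrite leqNgt; apply/negP => not_dominated.
by have := tau2_HY_lt_of_not_dominated a_young not_dominated; rewrite tau2_eq ltnn.
Qed.
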